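(* Let $P_1(t),\dots,P_J(t)$ be pairwise relatively prime reciprocal polynomials and $P(t)=\prod_{j=1}^JP_j(t)$. Then the canonical projections $\mathfrak{OA}/\mathfrak I_{P(t)}\to\mathfrak{OA}/\mathfrak I_{P_j(t)}$ induce a Lie algebra isomorphism $\mathfrak{OA}/\mathfrak I_{P(t)}\xrightarrow{\sim}\prod_{j=1}^J\mathfrak{OA}/\mathfrak I_{P_j(t)}$.
   Context: Work over $\mathbb C$. $\mathfrak{sl}_2$ has basis $e,f,h$ with $[e,f]=h$, $[h,e]=2e$, $[h,f]=-2f$. $L(\mathfrak{sl}_2)=\mathbb C[t,t^{-1}]\otimes\mathfrak{sl}_2$ is the loop algebra with bracket $[p(t)x,q(t)y]=p(t)q(t)[x,y]$. The Onsager algebra is the Lie subalgebra $\mathfrak{OA}=\{p(t)e+p(t^{-1})f+q(t)h:\ p,q\in\mathbb C[t,t^{-1}],\ q(t^{-1})=-q(t)\}$ of $L(\mathfrak{sl}_2)$. A reciprocal polynomial is a nonconstant monic $P\in\mathbb C[t]$ with $P(t)=\pm t^{\deg P}P(t^{-1})$. For a reciprocal polynomial $P$, $\mathfrak I_{P(t)}=\{p(t)e+p(t^{-1})f+q(t)h\in\mathfrak{OA}:\ p(t),q(t)\in P(t)\mathbb C[t,t^{-1}]\}$; it is an ideal of $\mathfrak{OA}$, and $\mathfrak I_{P}\subseteq\mathfrak I_Q$ when $Q\mid P$. *)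

From HB Require Import structures.
From mathcomp Require Import all_boot all_order all_algebra.
From mathcomp Require Import complex Rstruct.
Set Implicit Arguments. Unset Strict Implicit. Unset Printing Implicit Defensive.
Import GRing.Theory.
Local Open Scope ring_scope.

Definition C : fieldType := Rdefinitions.R[i].

(* ---------- Laurent polynomials C[t,t^-1] ----------
   A Laurent polynomial is represented by a pair (a, n) with a : {poly C},
   n : nat, standing for t^{-n} a(t).  Two representatives denote the same
   Laurent polynomial iff [leqL] holds. *)
Definition laurent := ({poly C} * nat)%type.

(* t^{-n} a = t^{-m} b  <->  a t^m = b t^n *)
Definition leqL (x y : laurent) : Prop := x.1 * 'X^(y.2) = y.1 * 'X^(x.2).
Definition addL (x y : laurent) : laurent := (x.1 * 'X^(y.2) + y.1 * 'X^(x.2), (x.2 + y.2)%N).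
Definition oppL (x : laurent) : laurent := (- x.1, x.2).
Definition mulL (x y : laurent) : laurent := (x.1 * y.1, (x.2 + y.2)%N).
Definition polyL (p : {poly C}) : laurent := (p, 0%N).
(* p(t) |-> p(t^{-1}):  for p = t^{-n} a with s = size a,
   p(t^{-1}) = t^n sum_{i<s} a_i t^{-i} = t^{-s} sum_{k <= n+s} a_{n+s-k} t^k. *)
Definition invL (x : laurent) : laurent :=
  (\poly_(k < (x.2 + size x.1).+1) x.1`_(x.2 + size x.1 - k), size x.1).

Definition divL (P : {poly C}) (p : laurent) : Prop :=
  exists r : laurent, leqL p (mulL (polyL P) r).

(* ---------- the loop algebra L(sl2) = C[t,t^-1] (x) sl2 ----------
   An element p(t) e + p'(t) f + q(t) h is the triple (p, p', q). *)
Record loop := Loop { le : laurent; lf : laurent; lh : laurent }.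
Definition loop_sub (x y : loop) : loop :=
  Loop (addL (le x) (oppL (le y))) (addL (lf x) (oppL (lf y))) (addL (lh x) (oppL (lh y))).

(* Membership in the Onsager algebra:
   p(t) e + p(t^{-1}) f + q(t) h with q(t^{-1}) = -q(t). *)
Definition inOA (x : loop) : Prop :=
  leqL (lf x) (invL (le x)) /\ leqL (invL (lh x)) (oppL (lh x)).

Definition inI (P : {poly C}) (x : loop) : Prop :=
  inOA x /\ divL P (le x) /\ divL P (lh x).

(* t^{deg P} P(t^{-1}) *)
Definition recip (P : {poly C}) : {poly C} :=
  \poly_(i < size P) P`_((size P).-1 - i).

Definition reciprocal (P : {poly C}) : Prop :=
  P \is monic /\ (1 < size P)%N /\ (P = recip P \/ P = - recip P).

From HB Require Import structures.
From mathcomp Require Import all_boot all_order all_algebra ring.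
From mathcomp Require Import complex Rstruct.
Import GRing.Theory.
Local Open Scope ring_scope.

(* Representing the Laurent polynomial t^{-n} a(t) by the fraction a(t)/t^n
   in C(t), and its reflection by a(1/t) t^n, turns equality of
   representatives, [invL] and ideal membership into field identities.  For
   pairwise coprime P_j, Bezout then gives the Chinese remainder theorem in
   C[t,t^{-1}]: the ideals (P_j) intersect in (P), and e-components can be
   prescribed independently modulo each P_j (the f-component is forced by the
   e-component).  For the h-component a lift q of antisymmetric data is made
   antisymmetric again by (q(t) - q(t^{-1}))/2; this stays congruent modulo
   P_j because a reciprocal P_j generates an ideal stable under t -> t^{-1}. *)

Lemma horner_rev (R : comNzRingType) (a : {poly R}) (y z : R) N :
  y * z = 1 -> (size a <= N.+1)%N ->
  \sum_(k < N.+1) a`_(N - k) * y ^+ k = a.[z] * y ^+ N.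
Proof.
move=> yz ha; rewrite (horner_coef_wide _ ha) mulr_suml.
rewrite (reindex_inj rev_ord_inj) /=; apply: eq_bigr => k _.
have le_kN : (k <= N)%N by rewrite -ltnS.
rewrite subSS subKn // -mulrA; congr (_ * _).
have -> : y ^+ N = y ^+ (N - k) * y ^+ k by rewrite -exprD subnK.
by rewrite mulrCA -exprMn [z * y]mulrC yz expr1n mulr1.
Qed.

Lemma coprimep_prod (K : fieldType) (I : eqType) (p : {poly K}) (r : seq I)
    (Ps : I -> {poly K}) :
  (forall j, j \in r -> coprimep p (Ps j)) -> coprimep p (\prod_(j <- r) Ps j).
Proof.
elim: r => [|i r IH] cop_r; first by rewrite big_nil coprimep1.
rewrite big_cons coprimepMr cop_r ?mem_head //= IH // => j rj.
by rewrite cop_r // in_cons rj orbT.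
Qed.

Definition F := {fraction {poly C}}.
Definition cF : {rmorphism C -> F} := (@tofrac _) \o polyC.

Lemma cF_comm (z : F) : commr_rmorph cF z.
Proof. by move=> c; apply: mulrC. Qed.

Definition evF (z : F) : {rmorphism {poly C} -> F} := horner_morph (cF_comm z).

Definition tF : F := tofrac 'X.
Definition tFV : F := tF^-1.

Lemma tF_neq0 : tF != 0. Proof. by rewrite tofrac_eq0 polyX_eq0. Qed.
Lemma tF_tFV : tF * tFV = 1. Proof. by rewrite divff // tF_neq0. Qed.
Lemma tFV_tF : tFV * tF = 1. Proof. by rewrite mulrC tF_tFV. Qed.
Lemma tF_tFV_pow n : tF ^+ n * tFV ^+ n = 1.
Proof. by rewrite -exprMn tF_tFV expr1n. Qed.
Lemma tFV_tF_pow n : tFV ^+ n * tF ^+ n = 1.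
Proof. by rewrite mulrC tF_tFV_pow. Qed.

Lemma evFX z : evF z 'X = z.
Proof. exact: horner_morphX. Qed.

Lemma evFC z c : evF z c%:P = cF c.
Proof. exact: horner_morphC. Qed.

Lemma evF_tF (p : {poly C}) : evF tF p = tofrac p.
Proof.
elim/poly_ind: p => [|p c IHp]; first by rewrite !rmorph0.
by rewrite !rmorphD !rmorphM IHp evFX evFC.
Qed.

Lemma evF_poly (z : F) n (E : nat -> C) :
  evF z (\poly_(k < n) E k) = \sum_(k < n) cF (E k) * z ^+ k.
Proof.
rewrite poly_def rmorph_sum; apply: eq_bigr => k _.
by rewrite -mul_polyC rmorphM rmorphXn evFC evFX.
Qed.

Lemma evF_rev (z w : F) (a : {poly C}) N : z * w = 1 -> (size a <= N.+1)%N ->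
  evF z (\poly_(k < N.+1) a`_(N - k)) = evF w a * z ^+ N.
Proof.
move=> zw size_a; have -> : evF w a = (map_poly cF a).[w] by [].
rewrite evF_poly -horner_rev ?size_map_poly //.
by apply: eq_bigr => k _; rewrite coef_map.
Qed.

(* With z = t this is the value of the Laurent polynomial, with z = t^{-1}
   the value of its reflection. *)
Definition lvalAt (z w : F) (x : laurent) : F := evF z x.1 * w ^+ x.2.

Section LaurentValue.

Context {z w : F}.
Hypothesis zw : z * w = 1.

Let zw_pow n : z ^+ n * w ^+ n = 1. Proof. by rewrite -exprMn zw expr1n. Qed.

Lemma lvalAt_add x y : lvalAt z w (addL x y) = lvalAt z w x + lvalAt z w y.
Proof.
rewrite /lvalAt /= rmorphD !rmorphM !rmorphXn !evFX exprD mulrDl.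
have -> : evF z x.1 * z ^+ y.2 * (w ^+ x.2 * w ^+ y.2)
  = evF z x.1 * w ^+ x.2 * (z ^+ y.2 * w ^+ y.2) by ring.
have -> : evF z y.1 * z ^+ x.2 * (w ^+ x.2 * w ^+ y.2)
  = evF z y.1 * w ^+ y.2 * (z ^+ x.2 * w ^+ x.2) by ring.
by rewrite !zw_pow !mulr1.
Qed.

Lemma lvalAt_opp x : lvalAt z w (oppL x) = - lvalAt z w x.
Proof. by rewrite /lvalAt /= rmorphN mulNr. Qed.

Lemma lvalAt_mul x y : lvalAt z w (mulL x y) = lvalAt z w x * lvalAt z w y.
Proof. rewrite /lvalAt /= rmorphM exprD; ring. Qed.

Lemma lvalAt_poly p : lvalAt z w (polyL p) = evF z p.
Proof. by rewrite /lvalAt /= mulr1. Qed.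

Lemma lvalAt_leqL x y : leqL x y -> lvalAt z w x = lvalAt z w y.
Proof.
rewrite /leqL /lvalAt => /(congr1 (evF z)).
rewrite !rmorphM !rmorphXn !evFX => exy.
rewrite -[LHS]mulr1 -(zw_pow y.2) -[RHS]mulr1 -(zw_pow x.2).
have -> : evF z x.1 * w ^+ x.2 * (z ^+ y.2 * w ^+ y.2)
  = evF z x.1 * z ^+ y.2 * (w ^+ x.2 * w ^+ y.2) by ring.
rewrite exy; ring.
Qed.

End LaurentValue.

Lemma lvalAt_invL (z w : F) x : z * w = 1 -> lvalAt z w (invL x) = lvalAt w z x.
Proof.
move=> zw; rewrite /lvalAt /= (@evF_rev z w) ?leqW ?leq_addl //.
by rewrite exprD -!mulrA -exprMn zw expr1n mulr1.
Qed.

Notation lval := (lvalAt tF tFV).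
Notation lvalV := (lvalAt tFV tF).

Lemma leqL_lval x y : leqL x y <-> lval x = lval y.
Proof.
split=> [|exy]; first exact: (lvalAt_leqL tF_tFV).
move: exy; rewrite /lvalAt !evF_tF => exy.
apply/eqP; rewrite /leqL -tofrac_eq; apply/eqP.
rewrite !tofracM !tofracXn -/tF.
rewrite -[LHS]mulr1 -(tFV_tF_pow x.2) -[RHS]mulr1 -(tFV_tF_pow y.2).
have -> : tofrac x.1 * tF ^+ y.2 * (tFV ^+ x.2 * tF ^+ x.2)
  = tofrac x.1 * tFV ^+ x.2 * tF ^+ x.2 * tF ^+ y.2 by ring.
by rewrite exy; ring.
Qed.

Lemma lval_invL x : lval (invL x) = lvalV x.
Proof. exact: lvalAt_invL tF_tFV. Qed.

Lemma lvalV_invL x : lvalV (invL x) = lval x.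
Proof. exact: lvalAt_invL tFV_tF. Qed.

Definition in_lideal (P : {poly C}) (f : F) : Prop :=
  exists r : laurent, f = evF tF P * lval r.

Lemma divL_lideal P x : divL P x <-> in_lideal P (lval x).
Proof.
split=> [[r /leqL_lval ->] | [r exr]]; exists r.
  by rewrite lvalAt_mul lvalAt_poly.
by apply/leqL_lval; rewrite exr lvalAt_mul lvalAt_poly.
Qed.

Lemma in_lidealD P f g : in_lideal P f -> in_lideal P g -> in_lideal P (f + g).
Proof.
by move=> [r ->] [s ->]; exists (addL r s); rewrite (lvalAt_add tF_tFV) mulrDr.
Qed.

Lemma in_lidealN P f : in_lideal P f -> in_lideal P (- f).
Proof. by move=> [r ->]; exists (oppL r); rewrite lvalAt_opp mulrN. Qed.

Lemma in_lidealB P f g : in_lideal P f -> in_lideal P g -> in_lideal P (f - g).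
Proof. by move=> Pf /in_lidealN; apply: in_lidealD. Qed.

Lemma in_lidealMl P y f : in_lideal P f -> in_lideal P (lval y * f).
Proof. by move=> [r ->]; exists (mulL y r); rewrite lvalAt_mul mulrCA. Qed.

Lemma in_lideal_dvdp P Q f : Q %| P -> in_lideal P f -> in_lideal Q f.
Proof.
move=> /divpK defP [r ->]; exists (mulL (polyL (P %/ Q)) r).
rewrite lvalAt_mul lvalAt_poly -{1}defP rmorphM; ring.
Qed.

Lemma in_lideal_coprime p q f :
  coprimep p q -> in_lideal p f -> in_lideal q f -> in_lideal (p * q) f.
Proof.
move=> /Bezout_eq1_coprimepP [[u v] /= Buv] [r fp] [s fq].
exists (addL (mulL (polyL u) s) (mulL (polyL v) r)).
rewrite (lvalAt_add tF_tFV) !lvalAt_mul !lvalAt_poly.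
rewrite -[f]mulr1 -(rmorph1 (evF tF)) -Buv rmorphD !rmorphM mulrDr.
rewrite {1}fq fp; ring.
Qed.

Section CoprimeFamily.

Context {I : eqType} {Ps : I -> {poly C}}.
Hypothesis Ps_coprime : forall i j, i != j -> coprimep (Ps i) (Ps j).

Let coprimep_prod_notin {i r} :
  i \notin r -> coprimep (Ps i) (\prod_(j <- r) Ps j).
Proof.
move=> ir; apply: coprimep_prod => j jr; apply: Ps_coprime.
by apply: contraNneq ir => ->.
Qed.

Lemma in_lideal_prod (r : seq I) y : uniq r ->
  (forall j, j \in r -> in_lideal (Ps j) (lval y)) ->
  in_lideal (\prod_(j <- r) Ps j) (lval y).
Proof.
elim: r => [|i r IHr] /=.
  by rewrite big_nil; exists y; rewrite rmorph1 mul1r.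
move=> /andP[ir uniq_r] Pr_y; rewrite big_cons.
apply: in_lideal_coprime; first exact: coprimep_prod_notin.
  by apply: Pr_y; rewrite mem_head.
by apply: IHr => // j jr; apply: Pr_y; rewrite in_cons jr orbT.
Qed.

Lemma in_lideal_crt (r : seq I) (g : I -> laurent) : uniq r ->
  exists h, forall j, j \in r -> in_lideal (Ps j) (lval h - lval (g j)).
Proof.
elim: r => [|i r IHr] /=; first by exists (polyL 0).
move=> /andP[ir /IHr[h' Pr_h']].
have /Bezout_eq1_coprimepP[[u v] /= Buv] := coprimep_prod_notin ir.
(* v Q is 1 modulo Ps i and 0 modulo every Ps j, j in r *)
pose Q := \prod_(j <- r) Ps j.
exists (addL h' (mulL (polyL (v * Q)) (addL (g i) (oppL h')))).
move=> j; rewrite in_cons => /predU1P[-> | jr].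
  exists (mulL (polyL u) (addL h' (oppL (g i)))).
  rewrite !(lvalAt_add tF_tFV) !lvalAt_mul !lvalAt_poly !(lvalAt_add tF_tFV).
  rewrite !lvalAt_opp.
  have -> : evF tF (v * Q) = 1 - evF tF u * evF tF (Ps i).
    by rewrite -(rmorph1 (evF tF)) -Buv rmorphD !rmorphM; ring.
  ring.
rewrite (lvalAt_add tF_tFV) lvalAt_mul lvalAt_poly addrAC.
apply: in_lidealD; first exact: Pr_h'.
apply: in_lideal_dvdp (_ : in_lideal (v * Q) _); last by eexists.
by rewrite dvdp_mull // /Q (big_rem j) //= dvdp_mulr.
Qed.

End CoprimeFamily.

Lemma evF_tFV_reciprocal P : reciprocal P ->
  exists r, evF tFV P = evF tF P * lval r.
Proof.
move=> [_ [size_P recP]]; pose N := (size P).-1.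
have size_PN : size P = N.+1 by rewrite prednK // ltnW.
have [c recip_cP] : exists c, recip P = c * P.
  case: recP => {2}->; first by exists 1; rewrite mul1r.
  by exists (-1); rewrite mulN1r opprK.
have evF_recip : evF tF (recip P) = evF tFV P * tF ^+ N.
  by rewrite /recip size_PN /= (@evF_rev tF tFV P N tF_tFV) ?size_PN.
exists (c, N); rewrite /lvalAt -[LHS]mulr1 -(tF_tFV_pow N).
by rewrite [LHS]mulrA -evF_recip recip_cP rmorphM; ring.
Qed.

Lemma in_lideal_lvalV P y :
  reciprocal P -> in_lideal P (lval y) -> in_lideal P (lvalV y).
Proof.
move=> /evF_tFV_reciprocal[s evF_PV] [r yPr].
have /(lvalAt_leqL tFV_tF) -> : leqL y (mulL (polyL P) r).
  by apply/leqL_lval; rewrite yPr lvalAt_mul lvalAt_poly.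
exists (mulL s (invL r)).
by rewrite lvalAt_mul lvalAt_poly evF_PV lvalAt_mul lval_invL -[LHS]mulrA.
Qed.

Lemma in_lideal_bigprod (I : finType) (Ps : I -> {poly C}) y :
  (forall i j, i != j -> coprimep (Ps i) (Ps j)) ->
  (forall j, in_lideal (Ps j) (lval y)) -> in_lideal (\prod_j Ps j) (lval y).
Proof.
move=> Ps_coprime Ps_y.
by apply: (in_lideal_prod Ps_coprime _ _ (index_enum_uniq I)) => j _.
Qed.

Lemma in_lideal_fincrt (I : finType) (Ps : I -> {poly C}) (g : I -> laurent) :
  (forall i j, i != j -> coprimep (Ps i) (Ps j)) ->
  exists h, forall j, in_lideal (Ps j) (lval h - lval (g j)).
Proof.
move=> Ps_coprime.
have [h Ph] := in_lideal_crt Ps_coprime _ g (index_enum_uniq I).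
by exists h => j; apply: Ph; rewrite mem_index_enum.
Qed.

Lemma inOA_lval x :
  inOA x <-> lval (lf x) = lvalV (le x) /\ lvalV (lh x) = - lval (lh x).
Proof. by rewrite /inOA !leqL_lval !lval_invL lvalAt_opp. Qed.

Lemma lval_sub x y : lval (addL x (oppL y)) = lval x - lval y.
Proof. by rewrite (lvalAt_add tF_tFV) lvalAt_opp. Qed.

Lemma lvalV_sub x y : lvalV (addL x (oppL y)) = lvalV x - lvalV y.
Proof. by rewrite (lvalAt_add tFV_tF) lvalAt_opp. Qed.

Lemma inOA_sub x y : inOA x -> inOA y -> inOA (loop_sub x y).
Proof.
move=> /inOA_lval[fx hx] /inOA_lval[fy hy]; apply/inOA_lval => /=.
by rewrite !lval_sub !lvalV_sub fx hx fy hy; split=> //; rewrite opprD opprK.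
Qed.

Lemma inI_sub P x y : inOA x -> inOA y ->
  in_lideal P (lval (le x) - lval (le y)) ->
  in_lideal P (lval (lh x) - lval (lh y)) -> inI P (loop_sub x y).
Proof.
move=> OAx OAy Pe Ph; split; first exact: inOA_sub.
by split; apply/divL_lideal; rewrite lval_sub.
Qed.

Lemma inI_dvdp P Q x : Q %| P -> inI P x -> inI Q x.
Proof.
move=> QP [OAx [/divL_lideal Pe /divL_lideal Ph]]; split=> //.
by split; apply/divL_lideal; apply: in_lideal_dvdp QP _.
Qed.

Lemma inI_bigprod (I : finType) (Ps : I -> {poly C}) x :
  (forall i j, i != j -> coprimep (Ps i) (Ps j)) ->
  inOA x -> (forall j, inI (Ps j) x) -> inI (\prod_j Ps j) x.
Proof.
move=> Ps_coprime OAx PsI; split=> //.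
by split; apply/divL_lideal; apply: in_lideal_bigprod => // j;
  have [_ [Pe Ph]] := PsI j; apply/divL_lideal.
Qed.

Definition antisym_part (q : laurent) : laurent :=
  mulL (polyL (2^-1 : C)%:P) (addL q (oppL (invL q))).

Lemma cF_half : cF 2^-1 * 2 = 1.
Proof.
have two_neq0 : (2 : C) != 0 by rewrite Num.Theory.pnatr_eq0.
by rewrite -[2 : F](rmorph_nat cF 2) -rmorphM mulVf // rmorph1.
Qed.

Lemma lval_antisym_part q :
  lval (antisym_part q) = cF 2^-1 * (lval q - lvalV q).
Proof. by rewrite lvalAt_mul lvalAt_poly evFC lval_sub lval_invL. Qed.

Lemma lvalV_antisym_part q : lvalV (antisym_part q) = - lval (antisym_part q).
Proof.
rewrite lval_antisym_part lvalAt_mul lvalAt_poly evFC lvalV_sub lvalV_invL.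
ring.
Qed.

Lemma in_lideal_antisym_part P q a : reciprocal P ->
  lvalV a = - lval a -> in_lideal P (lval q - lval a) ->
  in_lideal P (lval (antisym_part q) - lval a).
Proof.
move=> recP a_anti Pqa.
have -> : lval (antisym_part q) - lval a =
    lval (polyL (2^-1 : C)%:P) * ((lval q - lval a) - lvalV (addL q (oppL a))).
  rewrite lvalAt_poly evFC lval_antisym_part lvalV_sub a_anti.
  rewrite -[lval a in LHS]mul1r -cF_half; ring.
apply/in_lidealMl/in_lidealB => //; apply: in_lideal_lvalV => //.
by rewrite lval_sub.
Qed.

Lemma inOA_crt (I : finType) (Ps : I -> {poly C}) (xs : I -> loop) :
  (forall j, reciprocal (Ps j)) ->
  (forall i j, i != j -> coprimep (Ps i) (Ps j)) ->
  (forall j, inOA (xs j)) ->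
  exists x, inOA x /\ forall j, inI (Ps j) (loop_sub x (xs j)).
Proof.
move=> Ps_rec Ps_coprime OAxs.
have [e Pe] := in_lideal_fincrt _ _ (fun j => le (xs j)) Ps_coprime.
have [q Pq] := in_lideal_fincrt _ _ (fun j => lh (xs j)) Ps_coprime.
have OAx : inOA (Loop e (invL e) (antisym_part q)).
  by apply/inOA_lval; rewrite /= lval_invL lvalV_antisym_part.
exists (Loop e (invL e) (antisym_part q)); split=> // j.
have /inOA_lval[_ h_anti] := OAxs j.
by apply: inI_sub => //; apply: in_lideal_antisym_part.
Qed.

Theorem lemma1 (J : nat) (Ps : 'I_J -> {poly C}) :
  (forall j, reciprocal (Ps j)) ->
  (forall i j : 'I_J, i != j -> coprimep (Ps i) (Ps j)) ->
  let P := \prod_(j < J) Ps j in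
  [/\ (forall (j : 'I_J) (x : loop), inI P x -> inI (Ps j) x),
      (forall x y : loop, inOA x -> inOA y ->
         (forall j, inI (Ps j) (loop_sub x y)) -> inI P (loop_sub x y))
    & (forall xs : 'I_J -> loop, (forall j, inOA (xs j)) ->
         exists x : loop, inOA x /\ forall j, inI (Ps j) (loop_sub x (xs j)))].
Proof.
move=> Ps_rec Ps_coprime P; split.
- by move=> j x; apply: inI_dvdp; rewrite /P (bigD1 j) //= dvdp_mulIl.
- by move=> x y OAx OAy; apply: inI_bigprod => //; apply: inOA_sub.
- by move=> xs; apply: inOA_crt.
Qed.
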